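(* Let $G$ be a group and $\mathcal{F}$ a family of finite subgroups of $G$. The orbit category $\mathrm{Or}(G,\mathcal{F})$ satisfies the unique factorisation property if and only if every member of $\mathcal{F}$ is a cyclic group of prime power order (different primes may occur for different members).
   Context: A family of subgroups is a non-empty set of subgroups closed under conjugation and passing to subgroups. $\mathrm{Or}(G,\mathcal{F})$ has objects $G/H$, $H\in\mathcal{F}$, and morphisms all $G$-equivariant maps; each morphism $G/H\to G/K$ is $\phi(g)\colon xH\mapsto xg^{-1}K$ for some $g$ with $gHg^{-1}\subseteq K$, unique modulo left multiplication by $K$. A morphism is unfactorisable if it is not an isomorphism and whenever $f=gh$ one of $g,h$ is an isomorphism. A category satisfies the unique factorisation property if for any two chains $x=x_0\xrightarrow{\alpha_1}\cdots\xrightarrow{\alpha_n}x_n=y$ and $x=x'_0\xrightarrow{\alpha'_1}\cdots\xrightarrow{\alpha'_{n'}}x'_{n'}=y$ of unfactorisable morphisms with equal composites, $n=n'$ and there are isomorphisms $h_i\colon x_i\to x'_i$ ($1\le i\le n-1$) with $h_1\alpha_1=\alpha'_1$, $\alpha'_nh_{n-1}=\alpha_n$ and $\alpha'_ih_{i-1}=h_i\alpha_i$ for $2\le i\le n-1$. *)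

From Stdlib Require Import Arith List ZArith Znumtheory.
Import ListNotations.

Record Group := MkGroup {
  gT :> Type;
  gmul : gT -> gT -> gT;
  gone : gT;
  ginv : gT -> gT;
  gmulA : forall x y z, gmul x (gmul y z) = gmul (gmul x y) z;
  gmul1 : forall x, gmul gone x = x;
  gmulV : forall x, gmul (ginv x) x = gone
}.

Open Scope nat_scope.
Section Defs.
Variable G : Group.

Local Notation "x * y" := (gmul G x y).
Local Notation "1" := (gone G).
Local Notation "x ^-1" := (ginv G x) (at level 3).

Definition subgroup (H : G -> Prop) : Prop :=
  H 1 /\ (forall x y, H x -> H y -> H (x * y)) /\ (forall x, H x -> H x^-1).

Definition subset (A B : G -> Prop) : Prop := forall x, A x -> B x.

Definition conj_set (g : G) (H : G -> Prop) : G -> Prop :=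
  fun y => exists h, H h /\ y = g * h * g^-1.

Definition has_card (H : G -> Prop) (N : nat) : Prop :=
  exists l : list G, NoDup l /\ length l = N /\ (forall x, H x <-> In x l).

Definition finite_set (H : G -> Prop) : Prop := exists N, has_card H N.

Definition family (F : (G -> Prop) -> Prop) : Prop :=
  (exists H, F H) /\
  (forall H, F H -> subgroup H) /\
  (forall H g, F H -> F (conj_set g H)) /\
  (forall H K, F H -> subgroup K -> subset K H -> F K).

Fixpoint gpow (g : G) (m : nat) : G :=
  match m with O => 1 | S m' => g * gpow g m' end.

Definition cyclic_set (H : G -> Prop) : Prop :=
  exists g, forall x, H x <-> exists m, x = gpow g m.

(* cyclic of prime power order p^k (k = 0 allowed: trivial group) *)
Definition cyclic_prime_power (H : G -> Prop) : Prop :=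
  cyclic_set H /\ exists p k, prime (Z.of_nat p) /\ has_card H (p ^ k).

(* Objects: G/H with H in F (identified with H).
   A morphism G/H -> G/K is phi(g) : xH |-> x g^-1 K for some g with
   g H g^-1 <= K; phi(g) = phi(g') iff g' g^-1 in K (g unique mod left
   multiplication by K).  phi(g') o phi(g) = phi(g' g); identity = phi(1). *)
Definition is_mor (H K : G -> Prop) (g : G) : Prop := subset (conj_set g H) K.

(* equality of morphisms with target G/K *)
Definition mor_eq (K : G -> Prop) (g g' : G) : Prop := K (g' * g^-1).

Definition is_iso (H K : G -> Prop) (g : G) : Prop :=
  is_mor H K g /\ exists g', is_mor K H g' /\ mor_eq H (g' * g) 1 /\ mor_eq K (g * g') 1.

Definition unfactorisable (F : (G -> Prop) -> Prop) (H K : G -> Prop) (g : G) : Prop :=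
  is_mor H K g /\ ~ is_iso H K g /\
  forall M a b, F M -> is_mor H M a -> is_mor M K b -> mor_eq K (b * a) g ->
    is_iso H M a \/ is_iso M K b.

(* a chain x_0 -a_1-> x_1 -> ... -a_n-> x_n of unfactorisable morphisms,
   objects xs 0 .. xs n, morphisms as 1 .. as n with as i : xs (i-1) -> xs i *)
Definition unf_chain (F : (G -> Prop) -> Prop) (n : nat)
  (xs : nat -> G -> Prop) (as_ : nat -> G) : Prop :=
  (forall i, i <= n -> F (xs i)) /\
  (forall i, 1 <= i <= n -> unfactorisable F (xs (i - 1)) (xs i) (as_ i)).

Fixpoint composite (as_ : nat -> G) (n : nat) : G :=
  match n with O => 1 | S m => as_ (S m) * composite as_ m end.

(* The isomorphisms h_1..h_{n-1} are
   supplemented by h_0 = h_n = identity (= phi(1)); the condition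
   a'_i h_{i-1} = h_i a_i for 1 <= i <= n then encodes exactly the three
   conditions of the definition. *)
Definition unique_factorisation (F : (G -> Prop) -> Prop) : Prop :=
  forall n xs as_ n' xs' as',
    unf_chain F n xs as_ -> unf_chain F n' xs' as' ->
    xs 0 = xs' 0 -> xs n = xs' n' ->
    mor_eq (xs n) (composite as_ n) (composite as' n') ->
    n = n' /\
    exists h : nat -> G,
      h 0 = 1 /\ h n = 1 /\
      (forall i, 1 <= i <= n - 1 -> is_iso (xs i) (xs' i) (h i)) /\
      (forall i, 1 <= i <= n ->
         mor_eq (xs' i) (as' i * h (i - 1)) (h i * as_ i)).

End Defs.

(* Up to conjugating H into K, an unfactorisable morphism G/H -> G/K of the orbit category is
   the inclusion of a maximal subgroup of K.  Conjugating every object of a chain of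
   unfactorisable morphisms into its last object Y along the composite morphisms therefore
   produces a maximal chain of subgroups of Y.

   If the subgroups of every member are totally ordered, a maximal chain is determined by its
   bottom; when Y is moreover abelian, equal composites give equal bottoms, and the
   conjugating elements provide the isomorphisms between the two chains.  Cyclic groups of
   prime power order are abelian with totally ordered subgroups.

   Conversely, given subgroups A and B of H, extend their intersection to maximal chains of
   inclusions up to H, one through A and one through B; unique factorisation forces the two
   chains to coincide, so A and B are comparable.  A finite group whose subgroups form a chain is
   generated by any element with a largest cyclic subgroup, and its order has a single prime
   divisor, since subgroups of two distinct prime orders would be incomparable. *)

From Stdlib Require Import Arith List ZArith Znumtheory Lia Classical ClassicalEpsilon
  FunctionalExtensionality PropExtensionality.

Local Open Scope nat_scope.

Lemma exists_least (P : nat -> Prop) n : P n -> exists m, P m /\ forall k, P k -> m <= k.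
Proof.
  intro Pn. destruct (dec_inh_nat_subset_has_unique_least_element P (fun k => classic (P k)))
    as [m [[Pm least] _]]; [now exists n|].
  now exists m.
Qed.

Lemma Nat_divide_Z a b : Nat.divide a b <-> (Z.of_nat a | Z.of_nat b)%Z.
Proof.
  split.
  - intros [z ->]. exists (Z.of_nat z). lia.
  - intros [c hc]. destruct (Nat.eq_dec a 0) as [->|a0]; [exists 0; lia|].
    assert (0 <= c)%Z by nia. exists (Z.to_nat c). lia.
Qed.

Lemma prime_nat_ge2 p : prime (Z.of_nat p) -> 2 <= p.
Proof. intro pp. apply prime_ge_2 in pp. lia. Qed.

Lemma divide_prime_pow p k m : prime (Z.of_nat p) -> Nat.divide m (p ^ k) -> exists j, m = p ^ j.
Proof.
  intro pp. pose proof (prime_nat_ge2 p pp). revert m.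
  induction k as [|k IH]; intros m m_pk.
  - exists 0. now apply Nat.divide_1_r.
  - destruct (classic (Nat.divide p m)) as [[z ->]|p_m].
    + rewrite Nat.pow_succ_r', (Nat.mul_comm p) in m_pk.
      apply Nat.mul_divide_cancel_r in m_pk; [|lia].
      destruct (IH z m_pk) as [j ->]. exists (S j). now rewrite Nat.pow_succ_r', Nat.mul_comm.
    + apply IH. apply Nat_divide_Z. apply Gauss with (Z.of_nat p).
      * rewrite <- Nat2Z.inj_mul, <- Nat.pow_succ_r'. now apply Nat_divide_Z.
      * apply rel_prime_sym, prime_rel_prime; [exact pp|]. now rewrite <- Nat_divide_Z.
Qed.

Lemma prime_pow_divisors_total p k m m' : prime (Z.of_nat p) ->
  Nat.divide m (p ^ k) -> Nat.divide m' (p ^ k) -> Nat.divide m m' \/ Nat.divide m' m.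
Proof.
  intros pp m_pk m'_pk.
  destruct (divide_prime_pow p k m pp m_pk) as [j ->].
  destruct (divide_prime_pow p k m' pp m'_pk) as [j' ->].
  destruct (Nat.le_ge_cases j j'); [left; exists (p ^ (j' - j)) | right; exists (p ^ (j - j'))];
    rewrite <- Nat.pow_add_r; f_equal; lia.
Qed.

Lemma exists_prime_divisor n : 1 < n -> exists p, prime (Z.of_nat p) /\ Nat.divide p n.
Proof.
  induction n as [n IH] using (well_founded_induction lt_wf). intro n_gt1.
  destruct (classic (prime (Z.of_nat n))) as [pn|npn].
  { exists n. split; [exact pn | apply Nat.divide_refl]. }
  destruct (not_prime_divide (Z.of_nat n) ltac:(lia) npn) as [d [d_bounds d_n]].
  rewrite <- (Z2Nat.id d), <- Nat_divide_Z in d_n by lia.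
  destruct (IH (Z.to_nat d) ltac:(lia) ltac:(lia)) as [p [pp p_d]].
  exists p. split; [exact pp | now apply (Nat.divide_trans _ (Z.to_nat d))].
Qed.

Lemma prime_power_of_unique_prime_divisor n : 0 < n ->
  (forall p q, prime (Z.of_nat p) -> prime (Z.of_nat q) ->
     Nat.divide p n -> Nat.divide q n -> p = q) ->
  exists p k, prime (Z.of_nat p) /\ n = p ^ k.
Proof.
  induction n as [n IH] using (well_founded_induction lt_wf). intros n_pos uniq.
  destruct (Nat.eq_dec n 1) as [->|n1]; [exists 2, 0; split; [exact prime_2 | reflexivity]|].
  destruct (exists_prime_divisor n ltac:(lia)) as [p [pp [u ->]]].
  pose proof (prime_nat_ge2 p pp).
  destruct (IH u ltac:(nia) ltac:(nia)) as [q [k [pq ->]]].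
  { intros a b pa pb a_u b_u. apply uniq; auto; now apply Nat.divide_mul_l. }
  destruct k as [|k]; [exists p, 1; split; [exact pp | cbn; lia]|].
  assert (q = p) as ->.
  { apply uniq; auto; [|apply Nat.divide_factor_r].
    apply Nat.divide_mul_l. rewrite Nat.pow_succ_r'. apply Nat.divide_factor_l. }
  exists p, (S (S k)). split; [exact pp|]. rewrite (Nat.pow_succ_r' p (S k)). lia.
Qed.

Section GroupLaws.
Context {G : Group}.
Local Notation "x * y" := (gmul G x y).
Local Notation "1" := (gone G).
Local Notation "x ^-1" := (ginv G x) (at level 3).

Lemma mulgV (x : G) : x * x^-1 = 1.
Proof.
  rewrite <- (gmul1 G (x * x^-1)).
  rewrite <- (gmulV G x^-1) at 1.
  rewrite <- gmulA, (gmulA G x^-1 x), gmulV, gmul1.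
  apply gmulV.
Qed.

Lemma mulg1 (x : G) : x * 1 = x.
Proof. rewrite <- (gmulV G x), gmulA, mulgV. apply gmul1. Qed.

Lemma mulgA_r (x y z : G) : x * y * z = x * (y * z).
Proof. now rewrite gmulA. Qed.

Lemma mulKg (x y : G) : x^-1 * (x * y) = y.
Proof. now rewrite gmulA, gmulV, gmul1. Qed.

Lemma mulKVg (x y : G) : x * (x^-1 * y) = y.
Proof. now rewrite gmulA, mulgV, gmul1. Qed.

Lemma invg_unique (x y : G) : y * x = 1 -> y = x^-1.
Proof. intro e. rewrite <- (mulg1 y), <- (mulgV x), gmulA, e. apply gmul1. Qed.

Lemma invgK (x : G) : (x^-1)^-1 = x.
Proof. symmetry. apply invg_unique, mulgV. Qed.

Lemma invgM (x y : G) : (x * y)^-1 = y^-1 * x^-1.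
Proof. symmetry. apply invg_unique. rewrite mulgA_r, mulKg. apply gmulV. Qed.

Lemma invg1 : 1^-1 = 1.
Proof. symmetry. apply invg_unique, gmul1. Qed.

End GroupLaws.

Global Hint Rewrite @invgK @invgM @invg1 @mulgA_r @mulKg @mulKVg gmul1 gmulV @mulg1 @mulgV : gsimpl.
Ltac gsimpl := autorewrite with gsimpl; try reflexivity.

Section Subgroups.
Context {G : Group}.
Local Notation "x * y" := (gmul G x y).
Local Notation "1" := (gone G).
Local Notation "x ^-1" := (ginv G x) (at level 3).
Local Notation subgroup := (subgroup G).
Local Notation subset := (subset G).
Local Notation conj_set := (conj_set G).
Local Notation gp := (gpow G).

Lemma set_ext (A B : G -> Prop) : (forall x, A x <-> B x) -> A = B.
Proof.
  intro e. apply functional_extensionality. intro x. apply propositional_extensionality, e.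
Qed.

Lemma subset_refl (A : G -> Prop) : subset A A.
Proof. now intros x. Qed.

Lemma subset_trans (A B C : G -> Prop) : subset A B -> subset B C -> subset A C.
Proof. intros AB BC x Ax. now apply BC, AB. Qed.

Lemma subset_antisym (A B : G -> Prop) : subset A B -> subset B A -> A = B.
Proof. intros AB BA. apply set_ext. split; auto. Qed.

Section Subgroup.
Variable H : G -> Prop.
Hypothesis sH : subgroup H.

Lemma subgroup1 : H 1.
Proof. apply sH. Qed.

Lemma subgroupM x y : H x -> H y -> H (x * y).
Proof. apply sH. Qed.

Lemma subgroupV x : H x -> H x^-1.
Proof. apply sH. Qed.

Lemma subgroupVr x : H x^-1 -> H x.
Proof. intro h. rewrite <- (invgK x). now apply subgroupV. Qed.

End Subgroup.

Lemma subgroupI A B : subgroup A -> subgroup B -> subgroup (fun x => A x /\ B x).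
Proof.
  intros sA sB. split; [|split].
  - split; now apply subgroup1.
  - intros x y [] []. split; now apply subgroupM.
  - intros x []. split; now apply subgroupV.
Qed.

Lemma conj_setE g S : conj_set g S = fun y => S (g^-1 * y * g).
Proof.
  apply set_ext. intro y. split.
  - intros [h [Sh ->]]. now gsimpl.
  - intro Sy. exists (g^-1 * y * g). split; [exact Sy | now gsimpl].
Qed.

Lemma subgroup_conj g S : subgroup S -> subgroup (conj_set g S).
Proof.
  intro sS. rewrite conj_setE. split; [|split].
  - gsimpl. now apply subgroup1.
  - intros x y Sx Sy.
    replace (g^-1 * (x * y) * g) with ((g^-1 * x * g) * (g^-1 * y * g)) by gsimpl.
    now apply subgroupM.
  - intros x Sx. replace (g^-1 * x^-1 * g) with ((g^-1 * x * g)^-1) by gsimpl.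
    now apply subgroupV.
Qed.

Lemma conj_setM a b S : conj_set (a * b) S = conj_set a (conj_set b S).
Proof.
  rewrite !conj_setE. apply set_ext. intro y.
  replace (b^-1 * (a^-1 * y * a) * b) with ((a * b)^-1 * y * (a * b)) by gsimpl. reflexivity.
Qed.

Lemma conj_set1 S : conj_set 1 S = S.
Proof. rewrite conj_setE. apply set_ext. intro y. now gsimpl. Qed.

Lemma conj_setK g S : conj_set g^-1 (conj_set g S) = S.
Proof. now rewrite <- conj_setM, gmulV, conj_set1. Qed.

Lemma conj_setVK g S : conj_set g (conj_set g^-1 S) = S.
Proof. now rewrite <- conj_setM, mulgV, conj_set1. Qed.

Lemma conj_subset g S T : subset S T -> subset (conj_set g S) (conj_set g T).
Proof. rewrite !conj_setE. intros ST y. apply ST. Qed.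

Lemma conj_subset_iff g S T : subset (conj_set g S) (conj_set g T) <-> subset S T.
Proof.
  split; [|apply conj_subset].
  intro h. rewrite <- (conj_setK g S), <- (conj_setK g T). now apply conj_subset.
Qed.

Lemma conj_set_id S g : subgroup S -> S g -> conj_set g S = S.
Proof.
  intros sS Sg. rewrite conj_setE. apply set_ext. intro y. split; intro h.
  - replace y with (g * (g^-1 * y * g) * g^-1) by gsimpl.
    apply (subgroupM _ sS); [apply (subgroupM _ sS) | apply (subgroupV _ sS)]; auto.
  - apply (subgroupM _ sS); [apply (subgroupM _ sS); [apply (subgroupV _ sS)|]|]; auto.
Qed.

Definition abelian (Y : G -> Prop) : Prop := forall x y, Y x -> Y y -> x * y = y * x.

Lemma conj_set_abelian Y S k : abelian Y -> Y k -> subset S Y -> conj_set k S = S.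
Proof.
  intros abY Yk SY. rewrite conj_setE. apply set_ext. intro y.
  assert (e : forall x, Y x -> k^-1 * x * k = x).
  { intros x Yx. now rewrite mulgA_r, (abY x k), mulKg. }
  split; intro h.
  - replace y with (k * (k^-1 * y * k) * k^-1) by gsimpl.
    now rewrite <- (abY _ k (SY _ h) Yk), mulgA_r, mulgV, mulg1.
  - now rewrite e by auto.
Qed.

Lemma has_card_le S T a b : subset S T -> has_card G S a -> has_card G T b -> a <= b.
Proof.
  intros ST [l [ndl [<- hl]]] [m [_ [<- hm]]].
  apply NoDup_incl_length; [exact ndl|]. intros x lx. now apply hm, ST, hl.
Qed.

Lemma has_card_unique S a b : has_card G S a -> has_card G S b -> a = b.
Proof.
  intros ha hb. apply Nat.le_antisymm; eapply has_card_le; eauto; apply subset_refl.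
Qed.

Lemma has_card_lt S T a b : subset S T -> ~ subset T S -> has_card G S a -> has_card G T b -> a < b.
Proof.
  intros ST nTS [l [ndl [<- hl]]] [m [_ [<- hm]]].
  destruct (not_all_ex_not _ _ nTS) as [x hx].
  apply imply_to_and in hx. destruct hx as [Tx nSx].
  change (length (x :: l) <= length m). apply NoDup_incl_length.
  - constructor; [now rewrite <- hl | exact ndl].
  - intros y [<-|ly]; apply hm; [exact Tx | now apply ST, hl].
Qed.

Lemma has_card_subset S T b : subset S T -> has_card G T b -> exists a, has_card G S a.
Proof.
  intros ST [m [ndm [_ hm]]].
  set (l := filter (fun x => if excluded_middle_informative (S x) then true else false) m).
  exists (length l), l. split; [now apply NoDup_filter|split; [reflexivity|]].
  intro x. unfold l. rewrite filter_In.
  destruct (excluded_middle_informative (S x)); split; try tauto.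
  - intro Sx. split; [now apply hm, ST | reflexivity].
  - now intros [_ ?].
Qed.

Lemma gpow_add g a b : gp g (a + b) = gp g a * gp g b.
Proof. induction a as [|a IH]; cbn; [now rewrite gmul1 | now rewrite IH, gmulA]. Qed.

Lemma gpow_comm g a b : gp g a * gp g b = gp g b * gp g a.
Proof. now rewrite <- !gpow_add, Nat.add_comm. Qed.

Lemma gpow_mul g a b : gp g (a * b) = gp (gp g a) b.
Proof.
  induction b as [|b IH]; cbn; [now rewrite Nat.mul_0_r|].
  now rewrite Nat.mul_succ_r, gpow_add, gpow_comm, IH.
Qed.

Lemma gpow1 m : gp 1 m = 1.
Proof. induction m as [|m IH]; cbn; [reflexivity | now rewrite IH, gmul1]. Qed.

Lemma gpow_mod g e x : 0 < e -> gp g e = 1 -> gp g x = gp g (x mod e).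
Proof.
  intros e_pos ge. rewrite (Nat.div_mod_eq x e) at 1.
  now rewrite gpow_add, gpow_mul, ge, gpow1, gmul1.
Qed.

Lemma gpow_sub_eq1 g i j : i <= j -> gp g i = gp g j -> gp g (j - i) = 1.
Proof.
  intros ij e. assert (e' : gp g (j - i) * gp g i = gp g i) by now rewrite <- gpow_add, Nat.sub_add.
  replace (gp g (j - i)) with (gp g (j - i) * gp g i * (gp g i)^-1) by gsimpl.
  now rewrite e', mulgV.
Qed.

Lemma subgroup_gpow H g m : subgroup H -> H g -> H (gp g m).
Proof.
  intros sH Hg. induction m as [|m IH]; [apply (subgroup1 _ sH) | now apply (subgroupM _ sH)].
Qed.

Lemma NoDup_gpow_seq g e : NoDup (map (gp g) (seq 0 e)) <->
  forall i j, i < e -> j < e -> gp g i = gp g j -> i = j.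
Proof.
  rewrite (NoDup_nth _ (gp g 0)), length_map, length_seq.
  split; intros inj i j i_e j_e; specialize (inj i j i_e j_e);
    rewrite !(map_nth (gp g) _ 0), !seq_nth in * by assumption; exact inj.
Qed.

Lemma exists_gpow_eq1 H N g : (forall m, H (gp g m)) -> has_card G H N ->
  exists e, 0 < e /\ gp g e = 1.
Proof.
  intros Hg [l [_ [<- hl]]].
  assert (nd : ~ NoDup (map (gp g) (seq 0 (S (length l))))).
  { intro nd. apply NoDup_incl_length with (l' := l) in nd.
    - rewrite length_map, length_seq in nd. lia.
    - intros x hx. apply in_map_iff in hx as [m [<- _]]. now apply hl. }
  apply NNPP. intro no_e. apply nd, NoDup_gpow_seq. intros i j _ _ e.
  destruct (Nat.lt_trichotomy i j) as [lt|[eq|lt]]; [exfalso|exact eq|exfalso]; apply no_e.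
  - exists (j - i). split; [lia|]. apply gpow_sub_eq1; [lia|exact e].
  - exists (i - j). split; [lia|]. apply gpow_sub_eq1; [lia|now symmetry].
Qed.

Definition cycle (g : G) : G -> Prop := fun x => exists m, x = gp g m.

Lemma cycle_self g : cycle g g.
Proof. exists 1%nat. cbn. now rewrite mulg1. Qed.

Lemma cycle_sub H g : subgroup H -> H g -> subset (cycle g) H.
Proof. intros sH Hg x [m ->]. now apply subgroup_gpow. Qed.

Lemma cycle_gpow_sub g m m' : Nat.divide m m' -> subset (cycle (gp g m')) (cycle (gp g m)).
Proof. intros [z ->] x [y ->]. exists (z * y)%nat. rewrite <- !gpow_mul. f_equal. lia. Qed.

Lemma subgroup_cycle g e : 0 < e -> gp g e = 1 -> subgroup (cycle g).
Proof.
  intros e_pos ge. split; [|split].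
  - now exists 0.
  - intros x y [a ->] [b ->]. exists (a + b). now rewrite gpow_add.
  - intros x [a ->]. exists ((e - 1) * a)%nat. symmetry. apply invg_unique.
    rewrite <- gpow_add. replace ((e - 1) * a + a)%nat with (e * a)%nat by nia.
    now rewrite gpow_mul, ge, gpow1.
Qed.

Lemma subgroup_cycle_in H N g : subgroup H -> has_card G H N -> H g ->
  subgroup (cycle g) /\ subset (cycle g) H.
Proof.
  intros sH hH Hg. split; [|now apply cycle_sub].
  destruct (exists_gpow_eq1 H N g) as [e [e_pos ge]];
    [intro m; now apply subgroup_gpow | exact hH |].
  now apply (subgroup_cycle g e).
Qed.

Lemma subgroup_trivial : subgroup (fun x => x = 1).
Proof.
  split; [reflexivity|split].
  - intros x y -> ->. apply gmul1.
  - intros x ->. apply invg1.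
Qed.

Lemma least_exponent_divides A g m : subgroup A -> 0 < m -> A (gp g m) ->
  (forall k, 0 < k /\ A (gp g k) -> m <= k) -> forall y, A (gp g y) -> Nat.divide m y.
Proof.
  intros sA m_pos Am m_min y Ay. exists (y / m).
  assert (Ar : A (gp g (y mod m))).
  { assert (ey : gp g y = gp (gp g m) (y / m) * gp g (y mod m))
      by now rewrite <- gpow_mul, <- gpow_add, <- Nat.div_mod_eq.
    replace (gp g (y mod m)) with ((gp (gp g m) (y / m))^-1 * gp g y) by (rewrite ey; gsimpl).
    apply (subgroupM _ sA); [apply (subgroupV _ sA), subgroup_gpow|]; auto. }
  rewrite (Nat.div_mod_eq y m) at 1.
  destruct (Nat.eq_dec (y mod m) 0) as [z|nz]; [nia|].
  specialize (m_min (y mod m) (conj (proj1 (Nat.neq_0_lt_0 _) nz) Ar)).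
  pose proof (Nat.mod_upper_bound y m). lia.
Qed.

Lemma has_card_cycle g e : 0 < e -> gp g e = 1 -> (forall k, 0 < k /\ gp g k = 1 -> e <= k) ->
  has_card G (cycle g) e.
Proof.
  intros e_pos ge e_min. exists (map (gp g) (seq 0 e)). split; [|split].
  - apply NoDup_gpow_seq. intros i j i_e j_e gij.
    destruct (Nat.lt_trichotomy i j) as [lt|[eq|lt]]; [exfalso|exact eq|exfalso].
    + assert (e <= j - i) by (apply e_min; split; [lia | now apply gpow_sub_eq1; [lia|]]). lia.
    + assert (e <= i - j) by (apply e_min; split; [lia | now apply gpow_sub_eq1; [lia|]]). lia.
  - now rewrite length_map, length_seq.
  - intro x. rewrite in_map_iff. split.
    + intros [m ->]. exists (m mod e). rewrite in_seq.
      split; [now rewrite <- gpow_mod | pose proof (Nat.mod_upper_bound m e); lia].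
    + intros [m [<- _]]. now exists m.
Qed.

Lemma cycle_order g N : has_card G (cycle g) N ->
  0 < N /\ gp g N = 1 /\ forall x, gp g x = 1 -> Nat.divide N x.
Proof.
  intro hN.
  destruct (exists_gpow_eq1 (cycle g) N g) as [e0 e0_spec]; [intro m; now exists m | exact hN|].
  destruct (exists_least (fun e => 0 < e /\ gp g e = 1) e0 e0_spec) as [e [[e_pos ge] e_min]].
  rewrite <- (has_card_unique _ _ _ (has_card_cycle g e e_pos ge e_min) hN).
  split; [exact e_pos | split; [exact ge|]].
  exact (least_exponent_divides (fun x => x = 1) g e subgroup_trivial e_pos ge e_min).
Qed.

Lemma subgroup_of_cycle A g N : subgroup A -> subset A (cycle g) -> has_card G (cycle g) N ->
  exists m, Nat.divide m N /\ A = cycle (gp g m).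
Proof.
  intros sA A_g hN. destruct (cycle_order g N hN) as [N_pos [gN _]].
  assert (AN : A (gp g N)) by (rewrite gN; now apply subgroup1).
  destruct (exists_least (fun m => 0 < m /\ A (gp g m)) N (conj N_pos AN))
    as [m [[m_pos Am] m_min]].
  pose proof (least_exponent_divides A g m sA m_pos Am m_min) as divides.
  exists m. split; [now apply divides|].
  apply subset_antisym; [|now apply cycle_sub].
  intros x Ax. destruct (A_g x Ax) as [y ->]. destruct (divides y Ax) as [z ->].
  exists z. now rewrite Nat.mul_comm, gpow_mul.
Qed.

Definition subgroups_total (Y : G -> Prop) : Prop :=
  forall A B, subgroup A -> subgroup B -> subset A Y -> subset B Y -> subset A B \/ subset B A.

Lemma cyclic_prime_powerE H : cyclic_prime_power G H ->
  exists g p k, prime (Z.of_nat p) /\ H = cycle g /\ has_card G (cycle g) (p ^ k).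
Proof.
  intros [[g hg] [p [k [pp hH]]]]. assert (H = cycle g) as -> by now apply set_ext.
  now exists g, p, k.
Qed.

Lemma cyclic_prime_power_abelian H : cyclic_prime_power G H -> abelian H.
Proof.
  intro cH. destruct (cyclic_prime_powerE H cH) as [g [_ [_ [_ [-> _]]]]].
  intros x y [a ->] [b ->]. apply gpow_comm.
Qed.

Lemma cyclic_prime_power_total H : cyclic_prime_power G H -> subgroups_total H.
Proof.
  intro cH. destruct (cyclic_prime_powerE H cH) as [g [p [k [pp [-> hH]]]]].
  intros A B sA sB A_g B_g.
  destruct (subgroup_of_cycle A g _ sA A_g hH) as [m [m_N ->]].
  destruct (subgroup_of_cycle B g _ sB B_g hH) as [m' [m'_N ->]].
  destruct (prime_pow_divisors_total p k m m' pp m_N m'_N); [right|left]; now apply cycle_gpow_sub.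
Qed.

Lemma subgroups_total_cyclic H N : subgroup H -> has_card G H N -> subgroups_total H ->
  exists g, H = cycle g.
Proof.
  intros sH hH totH.
  assert (max_cycle : forall l, exists g, H g /\
            forall x, In x l -> H x -> subset (cycle x) (cycle g)).
  { induction l as [|y l [g [Hg IH]]]; [exists 1; split; [now apply subgroup1 | now intros x []]|].
    destruct (classic (H y)) as [Hy|nHy].
    - destruct (subgroup_cycle_in H N y sH hH Hy) as [sy yH].
      destruct (subgroup_cycle_in H N g sH hH Hg) as [sg gH].
      destruct (totH _ _ sy sg yH gH) as [yg|gy].
      + exists g. split; [exact Hg|]. intros x [<-|lx] Hx; [exact yg | now apply IH].
      + exists y. split; [exact Hy|]. intros x [<-|lx] Hx; [apply subset_refl|].
        apply (subset_trans _ (cycle g)); [now apply IH | exact gy].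
    - exists g. split; [exact Hg|]. intros x [<-|lx] Hx; [contradiction | now apply IH]. }
  destruct hH as [l [_ [_ hl]]]. destruct (max_cycle l) as [g [Hg g_max]].
  exists g. apply subset_antisym; [|now apply cycle_sub].
  intros x Hx. apply (g_max x); [now apply hl | exact Hx | apply cycle_self].
Qed.

(* For [N = u p], [g^u] generates the subgroup of order [p]. *)
Lemma cycle_gpow_subset_prime_eq g N p q u v : has_card G (cycle g) N ->
  prime (Z.of_nat p) -> prime (Z.of_nat q) -> N = (u * p)%nat -> N = (v * q)%nat ->
  subset (cycle (gp g u)) (cycle (gp g v)) -> p = q.
Proof.
  intros hN pp pq Nu Nv uv. destruct (cycle_order g N hN) as [N_pos [gN N_div]].
  destruct (uv _ (cycle_self _)) as [t et].
  assert (guq : gp g (u * q) = 1).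
  { rewrite gpow_mul, et, <- !gpow_mul.
    replace (v * (t * q))%nat with (N * t)%nat by (rewrite Nv; ring).
    now rewrite gpow_mul, gN, gpow1. }
  destruct (N_div _ guq) as [z ez]. rewrite Nu in ez.
  assert (q_zp : q = (z * p)%nat).
  { apply (Nat.mul_cancel_l _ _ u); [lia|]. rewrite ez. ring. }
  assert (p_q : Nat.divide p q) by now exists z.
  apply Nat_divide_Z, prime_div_prime in p_q; [lia | exact pp | exact pq].
Qed.

Lemma subgroups_total_cycle_prime_power g N : has_card G (cycle g) N -> subgroups_total (cycle g) ->
  exists p k, prime (Z.of_nat p) /\ N = p ^ k.
Proof.
  intros hN tot. destruct (cycle_order g N hN) as [N_pos [gN _]].
  assert (sg : subgroup (cycle g)) by now apply (subgroup_cycle g N).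
  apply prime_power_of_unique_prime_divisor; [exact N_pos|].
  intros p q pp pq [u Nu] [v Nv].
  destruct (subgroup_cycle_in (cycle g) N (gp g u) sg hN) as [su u_g]; [now exists u|].
  destruct (subgroup_cycle_in (cycle g) N (gp g v) sg hN) as [sv v_g]; [now exists v|].
  destruct (tot _ _ su sv u_g v_g);
    [|symmetry]; eapply cycle_gpow_subset_prime_eq; eauto.
Qed.

Lemma subgroups_total_cyclic_prime_power H N : subgroup H -> has_card G H N -> subgroups_total H ->
  cyclic_prime_power G H.
Proof.
  intros sH hH totH. destruct (subgroups_total_cyclic H N sH hH totH) as [g ->].
  split; [now exists g|].
  destruct (subgroups_total_cycle_prime_power g N hH totH) as [p [k [pp ->]]].
  now exists p, k.
Qed.

Definition maximal_subgroup (A B : G -> Prop) : Prop :=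
  subset A B /\ ~ subset B A /\
  forall L, subgroup L -> subset A L -> subset L B -> subset L A \/ subset B L.

Lemma maximal_subgroup_conj g A B :
  maximal_subgroup A B -> maximal_subgroup (conj_set g A) (conj_set g B).
Proof.
  intros [AB [nBA cov]]. split; [|split].
  - now apply conj_subset.
  - now rewrite conj_subset_iff.
  - intros L sL AL LB.
    rewrite <- (conj_setVK g L), conj_subset_iff in AL, LB.
    rewrite <- (conj_setVK g L), !conj_subset_iff.
    apply cov; [now apply subgroup_conj | exact AL | exact LB].
Qed.

Lemma maximal_subgroup_unique A B B' :
  subgroup B -> maximal_subgroup A B -> maximal_subgroup A B' -> subset B B' -> B = B'.
Proof.
  intros sB [AB [nBA _]] [_ [_ cov']] BB'.
  destruct (cov' B sB AB BB') as [BA|B'B]; [contradiction | now apply subset_antisym].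
Qed.

Definition maximal_chain (T : nat -> G -> Prop) (n : nat) (Y : G -> Prop) : Prop :=
  T n = Y /\ (forall i, i <= n -> subgroup (T i)) /\
  (forall i, i < n -> maximal_subgroup (T i) (T (S i))).

Lemma maximal_chain_mono T n Y :
  maximal_chain T n Y -> forall i j, i <= j -> j <= n -> subset (T i) (T j).
Proof.
  intros [_ [_ stepT]] i j ij. induction j as [|j IH]; intro jn.
  - replace i with 0 by lia. apply subset_refl.
  - destruct (Nat.eq_dec i (S j)) as [->|ne]; [apply subset_refl|].
    apply (subset_trans _ (T j)); [apply IH; lia | apply stepT; lia].
Qed.

Lemma maximal_chain_sub T n Y : maximal_chain T n Y -> forall i, i <= n -> subset (T i) Y.
Proof.
  intros cT i i_n. pose proof cT as [<- _]. now apply (maximal_chain_mono T n (T n)).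
Qed.

Lemma maximal_chain_proper T n Y : maximal_chain T n Y -> forall i, i < n -> ~ subset Y (T i).
Proof.
  intros cT i i_n YT. pose proof cT as [_ [_ stepT]].
  apply (stepT i i_n). apply (subset_trans _ Y); [|exact YT].
  now apply (maximal_chain_sub T n).
Qed.

Lemma maximal_chains_eq T T' n n' Y : subgroups_total Y ->
  maximal_chain T n Y -> maximal_chain T' n' Y -> T 0 = T' 0 ->
  n = n' /\ forall i, i <= n -> T i = T' i.
Proof.
  intros totY cT cT' e0.
  pose proof cT as [Tn [sT stepT]]. pose proof cT' as [T'n [sT' stepT']].
  assert (E : forall i, i <= n -> i <= n' -> T i = T' i).
  { induction i as [|i IH]; intros i_n i_n'; [exact e0|].
    assert (m : maximal_subgroup (T' i) (T (S i))) by (rewrite <- IH by lia; apply stepT; lia).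
    assert (m' : maximal_subgroup (T' i) (T' (S i))) by (apply stepT'; lia).
    destruct (totY (T (S i)) (T' (S i))) as [c|c];
      try solve [auto | eapply maximal_chain_sub; eauto].
    - now apply (maximal_subgroup_unique (T' i)); auto.
    - symmetry. now apply (maximal_subgroup_unique (T' i)); auto. }
  assert (n = n') as <-.
  { destruct (Nat.lt_trichotomy n n') as [lt|[eq|lt]]; [exfalso|exact eq|exfalso].
    - apply (maximal_chain_proper T' n' Y cT' n lt).
      rewrite <- E, Tn by lia. apply subset_refl.
    - apply (maximal_chain_proper T n Y cT n' lt).
      rewrite E, T'n by lia. apply subset_refl. }
  split; [reflexivity|]. intros i i_n. now apply E.
Qed.

Definition chain_cat (T1 T2 : nat -> G -> Prop) (n1 i : nat) : G -> Prop :=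
  if i <=? n1 then T1 i else T2 (i - n1).

Lemma chain_cat_l T1 T2 n1 i : i <= n1 -> chain_cat T1 T2 n1 i = T1 i.
Proof. intro i_n1. unfold chain_cat. now rewrite (proj2 (Nat.leb_le _ _) i_n1). Qed.

Lemma chain_cat_r T1 T2 n1 i : T1 n1 = T2 0 -> n1 <= i -> chain_cat T1 T2 n1 i = T2 (i - n1).
Proof.
  intros e n1_i. destruct (Nat.eq_dec i n1) as [->|ne].
  - now rewrite chain_cat_l, Nat.sub_diag.
  - unfold chain_cat. now rewrite (proj2 (Nat.leb_gt _ _)) by lia.
Qed.

Lemma maximal_chain_cat T1 n1 T2 n2 Y :
  maximal_chain T1 n1 (T2 0) -> maximal_chain T2 n2 Y ->
  maximal_chain (chain_cat T1 T2 n1) (n1 + n2) Y.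
Proof.
  intros [e1 [s1 m1]] [e2 [s2 m2]]. split; [|split].
  - rewrite chain_cat_r by (auto; lia). now replace (n1 + n2 - n1) with n2 by lia.
  - intros i i_n. destruct (Nat.le_gt_cases i n1).
    + rewrite chain_cat_l by lia. now apply s1.
    + rewrite chain_cat_r by (auto; lia). apply s2. lia.
  - intros i i_n. destruct (Nat.lt_ge_cases i n1).
    + rewrite !chain_cat_l by lia. now apply m1.
    + rewrite !chain_cat_r by (auto; lia).
      replace (S i - n1) with (S (i - n1)) by lia. apply m2. lia.
Qed.

Lemma exists_maximal_chain X Y N : subgroup X -> subgroup Y -> subset X Y -> has_card G Y N ->
  exists n T, T 0 = X /\ maximal_chain T n Y.
Proof.
  intros sX sY XY hY. destruct (has_card_subset X Y N XY hY) as [a hX].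
  remember (N - a) as d eqn:ed. revert X Y N a sX sY XY hY hX ed.
  induction d as [d IH] using (well_founded_induction lt_wf).
  intros X Y N a sX sY XY hY hX ed.
  destruct (classic (subset Y X)) as [YX|nYX].
  { exists 0, (fun _ => X). split; [reflexivity|split; [|split]].
    - now apply subset_antisym.
    - now intros.
    - intros; lia. }
  destruct (classic (maximal_subgroup X Y)) as [mXY|nmXY].
  { exists 1%nat, (fun i => match i with 0 => X | _ => Y end).
    split; [reflexivity|split; [reflexivity|split]].
    - now intros [|i] _.
    - intros i i_1. now replace i with 0 by lia. }
  assert (exists L, subgroup L /\ subset X L /\ subset L Y /\ ~ subset L X /\ ~ subset Y L)
    as [L [sL [XL [LY [nLX nYL]]]]].
  { apply NNPP. intro noL. apply nmXY. split; [exact XY|split; [exact nYX|]].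
    intros L sL XL LY. apply NNPP. intro c. apply noL. exists L. tauto. }
  destruct (has_card_subset L Y N LY hY) as [c hL].
  assert (a < c) by (apply (has_card_lt X L); auto).
  assert (c < N) by (apply (has_card_lt L Y); auto).
  destruct (IH (c - a) ltac:(lia) X L c a) as [n1 [T1 [e1 c1]]]; auto.
  destruct (IH (N - c) ltac:(lia) L Y N c) as [n2 [T2 [e2 c2]]]; auto.
  exists (n1 + n2), (chain_cat T1 T2 n1). split.
  - rewrite chain_cat_l by lia. exact e1.
  - apply maximal_chain_cat; [rewrite e2; exact c1 | exact c2].
Qed.

Lemma exists_maximal_chain_through X W Y N :
  subgroup X -> subgroup W -> subgroup Y -> subset X W -> subset W Y -> has_card G Y N ->
  exists n T j, j <= n /\ T 0 = X /\ T j = W /\ maximal_chain T n Y.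
Proof.
  intros sX sW sY XW WY hY. destruct (has_card_subset W Y N WY hY) as [c hW].
  destruct (exists_maximal_chain X W c) as [n1 [T1 [e1 c1]]]; auto.
  destruct (exists_maximal_chain W Y N) as [n2 [T2 [e2 c2]]]; auto.
  exists (n1 + n2), (chain_cat T1 T2 n1), n1. split; [lia|split; [|split]].
  - now rewrite chain_cat_l by lia.
  - rewrite chain_cat_l by lia. now destruct c1.
  - apply maximal_chain_cat; [rewrite e2; exact c1 | exact c2].
Qed.

End Subgroups.

Section OrbitCategory.
Context {G : Group}.
Local Notation "x * y" := (gmul G x y).
Local Notation "1" := (gone G).
Local Notation "x ^-1" := (ginv G x) (at level 3).
Local Notation subgroup := (subgroup G).
Local Notation subset := (subset G).
Local Notation conj_set := (conj_set G).
Variable F : (G -> Prop) -> Prop.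
Hypothesis famF : family G F.

Lemma is_isoE H K g : subgroup H -> subgroup K -> is_iso G H K g <-> conj_set g H = K.
Proof.
  intros sH sK. unfold is_iso, is_mor, mor_eq. split.
  - intros [gHK [g' [g'KH [e1 e2]]]]. apply subset_antisym; [exact gHK|].
    rewrite conj_setE. intros y Ky.
    assert (Hg'g : H (g' * g)).
    { apply (subgroupVr _ sH). revert e1. now gsimpl. }
    assert (Hy : H (g' * y * g'^-1)) by (apply g'KH; rewrite conj_setE; now gsimpl).
    replace (g^-1 * y * g) with ((g' * g)^-1 * (g' * y * g'^-1) * (g' * g)) by gsimpl.
    apply (subgroupM _ sH); [apply (subgroupM _ sH); [apply (subgroupV _ sH)|]|]; auto.
  - intros e. split; [now rewrite e; apply subset_refl|].
    exists g^-1. split; [rewrite <- e, conj_setK; apply subset_refl|].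
    split; gsimpl; now apply subgroup1.
Qed.

Lemma family_subgroup H : F H -> subgroup H.
Proof. apply famF. Qed.

Lemma family_subset H K : F H -> subgroup K -> subset K H -> F K.
Proof. apply famF. Qed.

Lemma unfactorisable_maximal H K g : subgroup H -> F K ->
  unfactorisable G F H K g <-> maximal_subgroup (conj_set g H) K.
Proof.
  intros sH FK. pose proof (family_subgroup K FK) as sK. split.
  - intros [gHK [niso fact]]. split; [exact gHK|split].
    + intro KgH. apply niso, is_isoE; auto. now apply subset_antisym.
    + intros L sL gHL LK. pose proof (family_subset K L FK sL LK) as FL.
      destruct (fact L g 1 FL) as [iso|iso].
      * exact gHL.
      * unfold is_mor. now rewrite conj_set1.
      * unfold mor_eq. gsimpl. now apply subgroup1.
      * left. apply is_isoE in iso; auto. rewrite iso. apply subset_refl.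
      * right. apply is_isoE in iso; auto. rewrite conj_set1 in iso. rewrite iso. apply subset_refl.
  - intros [gHK [nKgH cov]]. split; [exact gHK|split].
    + intro iso. apply nKgH. apply is_isoE in iso; auto. rewrite iso. apply subset_refl.
    + intros M a b FM aHM bMK e. pose proof (family_subgroup M FM) as sM.
      unfold is_mor, mor_eq in *.
      (* [k] corrects [b a] to [g] inside [K], so [conj_set k] fixes [K] *)
      set (k := g * (b * a)^-1) in e.
      assert (gH : conj_set g H = conj_set k (conj_set b (conj_set a H))).
      { rewrite <- !conj_setM. f_equal. unfold k. now gsimpl. }
      assert (kK : conj_set k K = K) by now apply conj_set_id.
      destruct (cov (conj_set k (conj_set b M))) as [c|c].
      * now do 2 apply subgroup_conj.
      * rewrite gH. now do 2 apply conj_subset.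
      * rewrite <- kK. now apply conj_subset.
      * left. apply is_isoE; auto. apply subset_antisym; [exact aHM|].
        rewrite gH, !conj_subset_iff in c. exact c.
      * right. apply is_isoE; auto. apply subset_antisym; [exact bMK|].
        rewrite <- kK, conj_subset_iff in c. exact c.
Qed.

Lemma maximal_chain_unf_chain T n Y : F Y -> maximal_chain T n Y -> unf_chain G F n T (fun _ => 1).
Proof.
  intros FY cT. pose proof cT as [_ [sT stepT]].
  assert (FT : forall i, i <= n -> F (T i)).
  { intros i i_n. apply (family_subset Y); [exact FY | now apply sT |].
    now apply (maximal_chain_sub T n). }
  split; [exact FT|]. intros i i_n.
  apply unfactorisable_maximal; [apply sT; lia | apply FT; lia |].
  rewrite conj_set1. destruct i as [|i]; [lia|].
  replace (S i - 1) with i by lia. apply stepT. lia.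
Qed.

Lemma composite_const1 n : composite G (fun _ => 1) n = 1.
Proof. induction n as [|n IH]; [reflexivity|]. cbn. now rewrite IH, gmul1. Qed.

(* All morphisms being identities, the isomorphisms [h i] given by unique factorisation lie in
   [T' i], so conjugating by them fixes [T' i]. *)
Lemma unique_factorisation_maximal_chains_eq T T' n n' Y : unique_factorisation G F -> F Y ->
  maximal_chain T n Y -> maximal_chain T' n' Y -> T 0 = T' 0 ->
  n = n' /\ forall i, i <= n -> T i = T' i.
Proof.
  intros uf FY cT cT' e0.
  pose proof cT as [Tn _]. pose proof cT' as [T'n [sT' _]].
  destruct (uf n T (fun _ => 1) n' T' (fun _ => 1)) as [<- [h [h0 [_ [iso comm]]]]].
  - now apply (maximal_chain_unf_chain T n Y).
  - now apply (maximal_chain_unf_chain T' n' Y).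
  - exact e0.
  - congruence.
  - rewrite !composite_const1, Tn. unfold mor_eq. gsimpl. now apply subgroup1, family_subgroup.
  - split; [reflexivity|].
    assert (hT' : forall i, i <= n -> T' i (h i)).
    { induction i as [|i IH]; intro i_n; [rewrite h0; apply subgroup1, sT'; lia|].
      specialize (comm (S i) ltac:(lia)). replace (S i - 1) with i in comm by lia.
      unfold mor_eq in comm.
      replace (h (S i)) with (h (S i) * 1 * (1 * h i)^-1 * h i) by gsimpl.
      apply (subgroupM _ (sT' (S i) i_n)); [exact comm|].
      apply (maximal_chain_mono T' n Y cT' i (S i)); [lia | exact i_n | apply IH; lia]. }
    intros i i_n.
    destruct (Nat.eq_dec i 0) as [->|i_0]; [exact e0|].
    destruct (Nat.eq_dec i n) as [->|i_n']; [congruence|].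
    assert (e : conj_set (h i) (T i) = T' i).
    { apply is_isoE; [now apply cT; lia | now apply sT' | apply iso; lia]. }
    rewrite <- (conj_setK (h i) (T i)), e.
    apply conj_set_id; [now apply sT'|]. now apply subgroupV, hT'; [apply sT'|].
Qed.

Lemma unique_factorisation_subgroups_total H N :
  unique_factorisation G F -> F H -> has_card G H N -> subgroups_total H.
Proof.
  intros uf FH hH A B sA sB AH BH. pose proof (family_subgroup H FH) as sH.
  pose proof (subgroupI A B sA sB) as sD.
  destruct (exists_maximal_chain_through (fun x => A x /\ B x) A H N)
    as [n [T [j [j_n [T0 [Tj cT]]]]]]; auto; [now intros x []|].
  destruct (exists_maximal_chain_through (fun x => A x /\ B x) B H N)
    as [n' [T' [j' [j'_n [T'0 [T'j cT']]]]]]; auto; [now intros x []|].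
  destruct (unique_factorisation_maximal_chains_eq T T' n n' H uf FH cT cT') as [<- E];
    [congruence|].
  rewrite <- Tj, <- T'j, <- (E j') by lia.
  destruct (Nat.le_ge_cases j j'); [left|right]; now apply (maximal_chain_mono T n H).
Qed.

(* [xs i] conjugated into [xs n] along [as_ (S i)], ..., [as_ n] *)
Definition target_chain (as_ : nat -> G) (n : nat) (xs : nat -> G -> Prop) (i : nat) : G -> Prop :=
  conj_set (composite G as_ n * (composite G as_ i)^-1) (xs i).

Lemma unf_chain_target_chain n xs as_ :
  unf_chain G F n xs as_ -> maximal_chain (target_chain as_ n xs) n (xs n).
Proof.
  intros [Fxs unf]. unfold target_chain. split; [|split].
  - now rewrite mulgV, conj_set1.
  - intros i i_n. now apply subgroup_conj, family_subgroup, Fxs.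
  - intros i i_n.
    replace (composite G as_ n * (composite G as_ i)^-1)
      with (composite G as_ n * (composite G as_ (S i))^-1 * as_ (S i)) by (cbn; gsimpl).
    rewrite conj_setM. apply maximal_subgroup_conj, unfactorisable_maximal.
    + apply family_subgroup, Fxs. lia.
    + apply Fxs. lia.
    + specialize (unf (S i) ltac:(lia)). now replace (S i - 1) with i in unf by lia.
Qed.

Lemma unf_chains_conj n xs as_ n' xs' as' :
  unf_chain G F n xs as_ -> unf_chain G F n' xs' as' ->
  subgroups_total (xs n) -> abelian (xs n) ->
  xs 0 = xs' 0 -> xs n = xs' n' -> mor_eq G (xs n) (composite G as_ n) (composite G as' n') ->
  n = n' /\
  forall i, i <= n -> conj_set (composite G as' i * (composite G as_ i)^-1) (xs i) = xs' i.
Proof.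
  intros c c' totY abY e0 en em. unfold mor_eq in em.
  pose proof (unf_chain_target_chain n xs as_ c) as cT.
  pose proof (unf_chain_target_chain n' xs' as' c') as cT'. rewrite <- en in cT'.
  assert (shift : forall i, i <= n -> target_chain as_ n xs i
                    = conj_set (composite G as' n' * (composite G as_ i)^-1) (xs i)).
  { intros i i_n.
    rewrite <- (conj_set_abelian (xs n) _ _ abY em) by now apply (maximal_chain_sub _ n).
    unfold target_chain. rewrite <- conj_setM. f_equal. now gsimpl. }
  destruct (maximal_chains_eq _ _ n n' (xs n) totY cT cT') as [<- E].
  { rewrite shift by lia. unfold target_chain. now rewrite e0. }
  split; [reflexivity|]. intros i i_n.
  pose proof (E i i_n) as Ei. rewrite shift in Ei by lia. unfold target_chain in Ei.
  rewrite <- (conj_setK (composite G as' n * (composite G as' i)^-1) (xs' i)), <- Ei.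
  rewrite <- conj_setM. f_equal. now gsimpl.
Qed.

Lemma unique_factorisation_of_total_abelian :
  (forall H, F H -> subgroups_total H /\ abelian H) -> unique_factorisation G F.
Proof.
  intros tot_ab n xs as_ n' xs' as' c c' e0 en em.
  pose proof c as [Fxs _]. pose proof c' as [Fxs' _].
  destruct (tot_ab (xs n) (Fxs n (le_n n))) as [totY abY].
  destruct (unf_chains_conj n xs as_ n' xs' as' c c' totY abY e0 en em) as [<- conjE].
  split; [reflexivity|].
  (* [h n] must be the identity; [c'_n c_n^-1] only agrees with it modulo [xs n] *)
  exists (fun i => if Nat.eq_dec i n then 1 else composite G as' i * (composite G as_ i)^-1).
  split; [|split; [|split]].
  - destruct (Nat.eq_dec 0 n); [reflexivity|]. cbn. now gsimpl.
  - now destruct (Nat.eq_dec n n).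
  - intros i i_n. destruct (Nat.eq_dec i n); [lia|].
    apply is_isoE; [apply family_subgroup, Fxs; lia | apply family_subgroup, Fxs'; lia|].
    apply conjE. lia.
  - intros i i_n. destruct i as [|i]; [lia|]. unfold mor_eq in *. cbv beta.
    replace (S i - 1) with i by lia.
    destruct (Nat.eq_dec i n) as [|_]; [lia|].
    destruct (Nat.eq_dec (S i) n) as [<-|_].
    + rewrite <- en.
      replace (1 * as_ (S i) * (as' (S i) * (composite G as' i * (composite G as_ i)^-1))^-1)
        with ((composite G as' (S i) * (composite G as_ (S i))^-1)^-1) by (cbn; gsimpl).
      now apply subgroupV; [apply family_subgroup, Fxs|].
    + replace (_ * _) with 1 by (cbn; gsimpl). apply subgroup1, family_subgroup, Fxs'. lia.
Qed.

End OrbitCategory.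

Theorem proposition6p33 (G : Group) (F : (G -> Prop) -> Prop) :
  family G F -> (forall H, F H -> finite_set G H) ->
  (unique_factorisation G F <-> forall H, F H -> cyclic_prime_power G H).
Proof.
  intros famF finF. split.
  - intros uf H FH. destruct (finF H FH) as [N hN].
    apply (subgroups_total_cyclic_prime_power H N (family_subgroup F famF H FH) hN).
    exact (unique_factorisation_subgroups_total F famF H N uf FH hN).
  - intro cpp. apply (unique_factorisation_of_total_abelian F famF). intros H FH.
    split; [apply cyclic_prime_power_total | apply cyclic_prime_power_abelian]; auto.
Qed.
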